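(* Let $U\ge 1$ and $k\ge U$ be integers with $k$ a multiple of $U$. Let $(n(i))_{i\ge 0}$ be defined by: - $n(0)=1$; - $n(i)=\sum_{m=0}^{i-1}n(m)$ for $1\le i\le U$; - $n(i)=\sum_{m=1}^{i-1}n(m)$ for $U<i\le k$; - $n(i)=\sum_{m=i-k}^{i-1}n(m)$ for $i>k$. (This recurrence counts the peers newly reached at delay $i$ in the multiple-unbalanced-tree chunk distribution.) Then for all integers $i\ge 1$, $$n(i)=\sum_{j=1}^{U}F_k(i-j+1),$$ and consequently, for every integer $t\ge 0$, $$\sum_{i=1}^{t}n(i)=\sum_{j=1}^{U}S_k(t-j+1)=\overline{N}(t).$$
   Context: $F_k(i)=0$ for $i\le 0$, $F_k(1)=1$, and $F_k(i)=\sum_{j=1}^k F_k(i-j)$ for $i>1$ (the $k$-step Fibonacci sequence). $S_k(n)=0$ for $n\le 0$ and $S_k(n)=\sum_{i=1}^n F_k(i)$ for $n>0$. $\overline{N}(t)=\sum_{j=1}^{U}S_k(t-j+1)$ is the upper bound on the stream diffusion metric for chunk-based streaming with normalized upload capacity $U$ and at most $k$ neighbors per node. *)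

From mathcomp Require Import all_boot all_order all_algebra.
Set Implicit Arguments. Unset Strict Implicit. Unset Printing Implicit Defensive.

(* Flist k m = [:: F_k(0); F_k(1); ...; F_k(m)] (nat-indexed values). *)
Fixpoint Flist (k m : nat) : seq nat :=
  match m with
  | 0 => [:: 0]
  | m'.+1 =>
      let s := Flist k m' in
      rcons s (if m' == 0 then 1
               else \sum_(1 <= j < k.+1) nth 0 s (m'.+1 - j))
  end.
(* in the sum, an index m'.+1 - j truncated to 0 correctly yields F_k(0) = 0 *)

Definition Fnat (k i : nat) : nat := nth 0 (Flist k i) i.

(* k-step Fibonacci on integer arguments: F_k(i) = 0 for i <= 0 *)
Definition Fk (k : nat) (i : int) : nat :=
  match i with Posz n => Fnat k n | Negz _ => 0 end.

Definition Sk (k : nat) (n : int) : nat :=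
  match n with Posz m => \sum_(1 <= i < m.+1) Fnat k i | Negz _ => 0 end.

Definition Nbar (U k : nat) (t : int) : nat :=
  \sum_(1 <= j < U.+1) Sk k (t - (j%:Z) + 1)%R.

From mathcomp Require Import all_boot all_order all_algebra.
From mathcomp Require Import zify.
Import GRing.Theory.

(* Put  g(i) = sum_{j=1}^U F_k(i+1-j)  and extend every sequence
   by the value 0 at index 0 (truncated subtraction then reproduces the
   convention F_k(i) = 0 for i <= 0).  Both g and the sequence n, with n(0)
   replaced by 0, satisfy the same lag-k recurrence with a unit impulse on
   the window 1..U,
       a(i) = [1 <= i <= U] + sum_{l=1}^k a(i-l)      (i >= 1),
   since the original n(0) = 1 contributes exactly the impulse in the range
   1 <= i <= U.  Such a recurrence determines a from a(0), so n = g on i >= 1.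
   Summing g over 1..t and exchanging the two sums turns each column into a
   partial sum S_k, which gives the second claim; Nbar is that sum by
   definition. *)

Lemma sum_nat_eq0 (lo hi : nat) (F : nat -> nat) :
  (forall i, lo <= i < hi -> F i = 0) -> \sum_(lo <= i < hi) F i = 0.
Proof. by move=> F0; rewrite big1_seq // => i /andP [_]; rewrite mem_index_iota; apply: F0. Qed.

Lemma size_Flist k m : size (Flist k m) = m.+1.
Proof. by elim: m => [|m IH] //=; rewrite size_rcons IH. Qed.

Lemma nth_Flist k m i : i <= m -> nth 0 (Flist k m) i = Fnat k i.
Proof.
elim: m => [|m IH]; first by rewrite leqn0 => /eqP ->.
rewrite leq_eqVlt => /orP [/eqP -> //|lt_im].
by rewrite /= nth_rcons size_Flist lt_im IH.
Qed.

Lemma Flist_rcons k m : Flist k m.+1 =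
  rcons (Flist k m) (if m == 0 then 1 else \sum_(1 <= j < k.+1) nth 0 (Flist k m) (m.+1 - j)).
Proof. by []. Qed.

Lemma Fnat_step k m : Fnat k m.+2 = \sum_(1 <= j < k.+1) Fnat k (m.+2 - j).
Proof.
rewrite {1}/Fnat Flist_rcons nth_rcons size_Flist ltnn eqxx.
apply: eq_big_nat => j /andP [j_gt0 _]; apply: nth_Flist; lia.
Qed.

Lemma Fnat_rec k i : Fnat k i = (i == 1) + \sum_(1 <= l < k.+1) Fnat k (i - l).
Proof.
have F_lag0 l : i <= 1 -> 0 < l -> Fnat k (i - l) = 0.
  by move=> i_le1 l_gt0; have -> : i - l = 0 by lia.
case: i F_lag0 => [|[|m]] F_lag0; last by rewrite Fnat_step.
all: by rewrite sum_nat_eq0 // => l /andP [l_gt0 _]; apply: F_lag0.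
Qed.

Lemma lag_rec_unique {k} {c a b : nat -> nat} :
  a 0 = b 0 ->
  (forall i, 0 < i -> a i = c i + \sum_(1 <= l < k.+1) a (i - l)) ->
  (forall i, 0 < i -> b i = c i + \sum_(1 <= l < k.+1) b (i - l)) ->
  a =1 b.
Proof.
move=> ab0 a_rec b_rec; elim/ltn_ind => [[|i] IH] //.
rewrite a_rec // b_rec //; congr (_ + _).
by apply: eq_big_nat => l /andP [l_gt0 _]; apply: IH; lia.
Qed.

(* When a(0) = 0, the k lagged values a(i-1), ..., a(i-k) are the window
   a(i-k), ..., a(i-1); lags reaching below 0 only add copies of a(0). *)
Lemma sum_lags (a : nat -> nat) k i : a 0 = 0 ->
  \sum_(1 <= l < k.+1) a (i - l) = \sum_(i - k <= m < i) a m.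
Proof.
move=> a0; elim: k => [|k IH]; first by rewrite !big_geq ?subn0.
rewrite big_nat_recr //= IH.
case: (ltnP k i) => [lt_ki|le_ik].
- rewrite (@big_ltn _ _ _ (i - k.+1)); last by lia.
  have -> : (i - k.+1).+1 = i - k by lia.
  by rewrite addnC.
- have [-> ->] : i - k.+1 = 0 /\ i - k = 0 by lia.
  by rewrite a0 addn0.
Qed.

Lemma sum_indicator U i : \sum_(1 <= j < U.+1) (j == i) = (0 < i <= U).
Proof.
elim: U => [|U IH]; first by rewrite big_geq //; case: i.
by rewrite big_nat_recr //= IH; lia.
Qed.

Definition g U k i := \sum_(1 <= j < U.+1) Fnat k (i.+1 - j).

Lemma g0 U k : g U k 0 = 0.
Proof. by rewrite /g sum_nat_eq0 // => j /andP [j_gt0 _]; have -> : 1 - j = 0 by lia. Qed.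

(* g is the superposition of U shifted copies of F_k, so it obeys the
   Fibonacci recurrence with the unit impulse spread over 1..U. *)
Lemma g_rec U k i :
  g U k i = (0 < i <= U) + \sum_(1 <= l < k.+1) g U k (i - l).
Proof.
rewrite -sum_indicator /g.
under eq_big_nat => j /andP [j_gt0 _] do rewrite Fnat_rec.
rewrite big_split /=; congr (_ + _).
  by apply: eq_big_nat => j /andP [j_gt0 _]; congr nat_of_bool; apply/eqP/eqP; lia.
rewrite exchange_big_nat; apply: eq_big_nat => l _.
by apply: eq_big_nat => j /andP [j_gt0 _]; congr Fnat; lia.
Qed.

(* A sequence with its value at index 0 replaced by 0; for the peer counts
   this removes the source peer n(0) = 1. *)
Definition drop0 (n : nat -> nat) i := if i == 0 then 0 else n i.

Lemma sum_drop0 (n : nat -> nat) lo hi : 0 < lo ->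
  \sum_(lo <= m < hi) drop0 n m = \sum_(lo <= m < hi) n m.
Proof. by move=> lo_gt0; apply: eq_big_nat => m /andP [lo_m _]; rewrite /drop0; case: eqP; lia. Qed.

(* The chunk-distribution counts without the source peer satisfy the same
   recurrence as g: the source n(0) = 1 supplies the impulse on 1..U. *)
Lemma peers_rec {U k} {n : nat -> nat} : U <= k ->
  n 0 = 1 ->
  (forall i, 1 <= i <= U -> n i = \sum_(0 <= m < i) n m) ->
  (forall i, U < i <= k -> n i = \sum_(1 <= m < i) n m) ->
  (forall i, k < i -> n i = \sum_(i - k <= m < i) n m) ->
  forall i, 0 < i ->
  drop0 n i = (0 < i <= U) + \sum_(1 <= l < k.+1) drop0 n (i - l).
Proof.
move=> le_Uk n0 n_low n_mid n_high i i_gt0.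
rewrite sum_lags // {1}/drop0 (negbTE (lt0n_neq0 i_gt0)) i_gt0 /=.
case: (ltnP k i) => [lt_ki|le_ik].
  have -> : (i <= U) = false by lia.
  by rewrite n_high // sum_drop0 ?subn_gt0.
have -> : i - k = 0 by lia.
rewrite big_ltn // add0n sum_drop0 //.
case: (leqP i U) => [le_iU|lt_Ui]; first by rewrite n_low ?i_gt0 // big_ltn // n0.
by rewrite n_mid ?lt_Ui.
Qed.

Lemma sum_shifted_F k t j : 0 < j ->
  \sum_(1 <= i < t.+1) Fnat k (i.+1 - j) = \sum_(1 <= m < (t.+1 - j).+1) Fnat k m.
Proof.
move=> j_gt0; elim: t => [|t IH]; first by rewrite !big_geq //; lia.
rewrite big_nat_recr //= IH.
case: (leqP j t.+1) => [le_jt|lt_tj]; first by rewrite (subSn le_jt) [in RHS]big_nat_recr.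
have [-> ->] : t.+2 - j = 0 /\ t.+1 - j = 0 by lia.
by rewrite addn0.
Qed.

Lemma int_shiftE (i j : nat) :
  (i%:Z - j%:Z + 1)%R = if j <= i.+1 then Posz (i.+1 - j) else Negz (j - i.+2).
Proof. by case: leqP => cmp_ji; rewrite ?NegzE; lia. Qed.

Lemma FkE k i j : Fk k (i%:Z - j%:Z + 1)%R = Fnat k (i.+1 - j).
Proof. by rewrite int_shiftE; case: leqP => // lt_ij; have -> : i.+1 - j = 0 by lia. Qed.

Lemma SkE k t j :
  Sk k (t%:Z - j%:Z + 1)%R = \sum_(1 <= m < (t.+1 - j).+1) Fnat k m.
Proof.
rewrite int_shiftE; case: leqP => // lt_tj.
have -> : t.+1 - j = 0 by lia.
by rewrite big_geq.
Qed.

Theorem mainTheorem3 (U k : nat) (hU : 1 <= U) (hUk : U <= k) (hdiv : U %| k)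
  (n : nat -> nat)
  (h0 : n 0 = 1)
  (h1 : forall i, 1 <= i <= U -> n i = \sum_(0 <= m < i) n m)
  (h2 : forall i, U < i <= k -> n i = \sum_(1 <= m < i) n m)
  (h3 : forall i, k < i -> n i = \sum_(i - k <= m < i) n m) :
  (forall i, 1 <= i -> n i = \sum_(1 <= j < U.+1) Fk k (i%:Z - j%:Z + 1)%R) /\
  (forall t, \sum_(1 <= i < t.+1) n i = \sum_(1 <= j < U.+1) Sk k (t%:Z - j%:Z + 1)%R
          /\ \sum_(1 <= i < t.+1) n i = Nbar U k t%:Z).
Proof.
have n_eq_g i : 0 < i -> n i = g U k i.
  move=> i_gt0.
  have := lag_rec_unique (g0 U k) (fun i _ => g_rec U k i) (peers_rec hUk h0 h1 h2 h3) i.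
  by rewrite /drop0 (negbTE (lt0n_neq0 i_gt0)).
have partial_sums t : \sum_(1 <= i < t.+1) n i = \sum_(1 <= j < U.+1) Sk k (t%:Z - j%:Z + 1)%R.
  rewrite (eq_big_nat _ _ (F2 := g U k)) => [|i /andP [i_gt0 _]]; last exact: n_eq_g.
  rewrite /g exchange_big_nat; apply: eq_big_nat => j /andP [j_gt0 _].
  by rewrite SkE sum_shifted_F.
split=> [i i_gt0|t]; last by rewrite partial_sums.
by rewrite n_eq_g //; apply: eq_big_nat => j _; rewrite FkE.
Qed.
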